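(* There is a constant $C_n>0$ depending only on $n$ such that: if $Z:\mathbb{T}^d\to Gl(n,\mathbb{C})$ (continuous) satisfies $\left|\int_{\mathbb{T}^d}\det Z(\theta)\,d\theta\right|=1$, then there exists $\lambda\in[-1,1]$ such that $$\left|\int_{\mathbb{T}^d}\det\big(\Re Z(\theta)+\lambda\Im Z(\theta)\big)\,d\theta\right|\ge C_n.$$
   Context: $\mathbb{T}^d=\mathbb{R}^d/\mathbb{Z}^d$ with Haar (Lebesgue) measure; $\Re Z$ and $\Im Z$ are the entrywise real and imaginary parts of $Z$. *)

From mathcomp Require Import all_boot all_algebra.
From mathcomp Require Import all_classical all_reals all_analysis.
From mathcomp Require Import complex.
Import GRing.Theory Num.Theory numFieldTopology.Exports numFieldNormedType.Exports.
Local Open Scope ring_scope.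
Local Open Scope classical_set_scope.

(* A function on the torus T^d = R^d / Z^d is represented by its lift to R^d
   ('rV[R]_d), i.e. a function that is 1-periodic in every coordinate. *)
Definition torus_periodic {R : realType} {d : nat} {T : Type}
    (f : 'rV[R]_d -> T) : Prop :=
  forall (x : 'rV[R]_d) (i : 'I_d), f (x + delta_mx 0 i) = f x.

(* Integral against the Haar (Lebesgue) measure of T^d, computed as the
   iterated Lebesgue integral over the fundamental domain [0,1]^d
   (for continuous functions this coincides with the product-measure
   integral, by Fubini). *)
Fixpoint torus_int {R : realType} (d : nat) : ('rV[R]_d -> R) -> R :=
  match d return ('rV[R]_d -> R) -> R with
  | 0 => fun f => f 0
  | d'.+1 => fun f =>
      Rintegral (@lebesgue_measure R) `[0%R, 1%R]
        (fun t : R => torus_int d' (fun x : 'rV[R]_d' =>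
                         f (row_mx (const_mx t : 'rV[R]_1) x)))
  end.

Definition torus_cint {R : realType} (d : nat) (f : 'rV[R]_d -> R[i]) : R[i] :=
  (torus_int d (fun x => complex.Re (f x)) +i* torus_int d (fun x => complex.Im (f x)))%C.

Definition mxRe {R : realType} {n : nat} (Z : 'M[R[i]]_n) : 'M[R]_n :=
  map_mx (@complex.Re R) Z.
Definition mxIm {R : realType} {n : nat} (Z : 'M[R[i]]_n) : 'M[R]_n :=
  map_mx (@complex.Im R) Z.

From mathcomp Require Import all_boot all_algebra.
From mathcomp Require Import all_classical all_reals all_analysis.
From mathcomp Require Import complex.
Import GRing.Theory Num.Theory numFieldTopology.Exports numFieldNormedType.Exports.
From mathcomp Require Import perm qpoly zify lra.
Import order.Order.TTheory.
Local Open Scope ring_scope.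
Local Open Scope complex_scope.

(* For a fixed matrix M the map s |-> det (Re M + s Im M) is a real polynomial
   p of degree at most n, and det M = p(i).  Lagrange interpolation at the
   nodes t_k = k / (n + 1) of [0, 1] gives det M = sum_k p(t_k) l_k(i), where
   the weights l_k(i) depend only on n.  The iterated torus integral is linear
   on continuous functions, so |int det Z| <= sum_k |int p_x(t_k)| |l_k(i)|;
   hence if |int det Z| = 1, some t_k satisfies
   |int det (Re Z + t_k Im Z)| >= C_n := 1 / (1 + sum_k |l_k(i)|). *)

Lemma size_det_linear_poly (R : comNzRingType) n (N : 'M[{poly R}]_n) :
  (forall i j, size (N i j) <= 2)%N -> (size (\det N) <= n.+1)%N.
Proof.
move=> N2; apply: leq_trans (size_sum _ _ _) _; apply/bigmax_leqP => s _.
have size_prod : (size (\prod_i N i (s i))%R <= n.+1)%N.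
  apply: leq_trans (size_poly_prod_leq _ _) _; rewrite card_ord.
  have : (\sum_i size (N i (s i)) <= \sum_(i < n) 2)%N by apply: leq_sum.
  rewrite sum_nat_const card_ord; lia.
by case: (odd_perm s); rewrite ?expr1 ?expr0 ?mulN1r ?mul1r ?size_polyN.
Qed.

Definition det_pencil {R : comNzRingType} {n : nat} (A B : 'M[R]_n) : {poly R} :=
  \det (map_mx polyC A + 'X *: map_mx polyC B).

Lemma size_det_pencil (R : comNzRingType) n (A B : 'M[R]_n) :
  (size (det_pencil A B) <= n.+1)%N.
Proof.
apply: size_det_linear_poly => i j; rewrite !mxE mulrC mul_polyC.
apply: leq_trans (size_polyD _ _) _; rewrite geq_max size_polyC.
apply/andP; split; first by case: (_ != 0).
by apply: leq_trans (size_scale_leq _ _) _; rewrite size_polyX.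
Qed.

Lemma horner_det_pencil (R : comNzRingType) n (A B : 'M[R]_n) z :
  (det_pencil A B).[z] = \det (A + z *: B).
Proof.
rewrite -[_.[z]]/(horner_eval z _) -det_map_mx; congr (\det _).
by apply/matrixP => i j; rewrite !mxE /= /horner_eval !hornerE mulrC.
Qed.

Lemma det_pencil_lagrange (K : fieldType) n (x : nat -> K) :
  injective x -> forall (A B : 'M[K]_n) z,
  \det (A + z *: B) =
  \sum_(k < n.+1) \det (A + x k *: B) * (tnth (lagrange n.+1 x) k).[z].
Proof.
move=> x_inj A B z; rewrite -horner_det_pencil.
rewrite {1}(lagrange_gen (ltn0Sn n) x_inj (size_det_pencil _ _ A B)) horner_sum.
by apply: eq_bigr => k _; rewrite hornerM hornerC horner_det_pencil.
Qed.

Definition lagrange_weight {R : realType} {n : nat} (t : nat -> R) (k : 'I_n.+1) : R[i] :=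
  (tnth (lagrange n.+1 (fun k => (t k)%:C)) k).['i].

Lemma det_complex_interp {R : realType} {n : nat} (t : nat -> R) (M : 'M[R[i]]_n) :
  injective t ->
  \det M = \sum_(k < n.+1) (\det (mxRe M + t k *: mxIm M))%:C * lagrange_weight t k.
Proof.
move=> t_inj.
have tC_inj : injective (fun k => (t k)%:C) by move=> k l /complexI /t_inj.
have -> : \det M =
    \det (map_mx (real_complex R) (mxRe M) + 'i *: map_mx (real_complex R) (mxIm M)).
  by congr (\det _); apply/matrixP => i j; rewrite !mxE; exact: complexE.
rewrite (det_pencil_lagrange _ _ _ tC_inj); apply: eq_bigr => k _; congr (_ * _).
rewrite -det_map_mx; congr (\det _); apply/matrixP => i j.
by rewrite !mxE /= rmorphD rmorphM.
Qed.

Local Open Scope classical_set_scope.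

Lemma comp_continuous {X Y Z : topologicalType} {f : X -> Y} {g : Y -> Z} :
  continuous f -> continuous g -> continuous (g \o f).
Proof. by move=> fc gc x; exact: continuous_comp (fc x) (gc (f x)). Qed.

Lemma pair_continuous {T X Y : topologicalType} {f : T -> X} {g : T -> Y} :
  continuous f -> continuous g -> continuous (fun x => (f x, g x)).
Proof. by move=> fc gc x; apply: cvg_pair; [exact: fc | exact: gc]. Qed.

Lemma continuous_mx (T : topologicalType) (K : numFieldType) m n
    (f : T -> 'M[K]_(m, n)) :
  (forall i j, continuous (fun x => f x i j)) -> continuous f.
Proof.
move=> fc x A [P nP sPA].
have : \forall y \near x, forall i j, P i j (f y i j).
  by apply: filter_forall => i; apply: filter_forall => j; exact: fc.
by apply: filterS => y Py; exact: sPA.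
Qed.

Lemma det_continuous (K : numFieldType) n : continuous (fun A : 'M[K]_n => \det A).
Proof.
rewrite /determinant.
apply: (continuous_big add_continuous) => s _.
have prod_cont : continuous (fun A : 'M[K]_n => \prod_i A i (s i)).
  by apply: (continuous_big mul_continuous) => i _; exact: coord_continuous.
by move=> A; exact: (cvgM (cvg_cst _) (prod_cont A)).
Qed.

Definition row_cons {R : realType} {d : nat} (t : R) (x : 'rV[R]_d) : 'rV[R]_(1 + d) :=
  row_mx (const_mx t : 'rV[R]_1) x.

Lemma row_cons_continuous (T : topologicalType) (R : realType) d
    (f : T -> R) (g : T -> 'rV[R]_d) :
  continuous f -> continuous g -> continuous (fun x => row_cons (f x) (g x)).
Proof.
move=> fc gc; apply: continuous_mx => i k.
rewrite -[k]splitK; case: (fintype.split k) => j /=.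
- suff -> : (fun x => row_cons (f x) (g x) i (lshift d j)) = f by [].
  by apply/funext => x; rewrite /row_cons row_mxEl mxE.
- suff -> : (fun x => row_cons (f x) (g x) i (rshift 1 j)) = (fun x => g x i j).
    exact: (comp_continuous gc (@coord_continuous _ _ _ i j)).
  by apply/funext => x; rewrite /row_cons row_mxEr.
Qed.

Lemma near_uniform_compact {R : realType} {X Y : topologicalType} {K : set X}
    {g : Y * X -> R} (y0 : Y) {e : R} :
  compact K -> continuous g -> 0 < e ->
  \forall y \near y0, K `<=` [set t | `|g (y0, t) - g (y, t)| <= e].
Proof.
move=> /compact_near_coveringP cK gc e0.
apply: cK => t Kt.
move/cvgrPdist_le : (gc (y0, t)) => /(_ (e / 2) (divr_gt0 e0 (ltr0Sn _ 1))).
case=> -[A B] /= [y0A tB] AB.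
exists (B, A) => [//|[t' y] /= [Bt' Ay]].
apply: le_trans (ler_distD (g (y0, t)) _ _) _.
rewrite (splitr e) distrC; apply: lerD.
- exact: (AB (y0, t')) (conj (nbhs_singleton y0A) Bt').
- exact: (AB (y, t')).
Qed.

Section IntervalIntegral.
Context {R : realType}.
Notation mu := (@lebesgue_measure R).
Variables a b : R.

Lemma continuous_integrable_itv {f : R -> R} :
  continuous f -> mu.-integrable `[a, b] (EFin \o f).
Proof.
move=> fc; apply: continuous_compact_integrable; first exact: (@segment_compact R a b).
exact: continuous_subspaceT.
Qed.

Lemma Rintegral_itv_sum (I : Type) (r : seq I) (c : I -> R) (g : I -> R -> R) :
  (forall i, continuous (g i)) ->
  \int[mu]_(t in `[a, b]) (\sum_(i <- r) c i * g i t) =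
  \sum_(i <- r) c i * \int[mu]_(t in `[a, b]) g i t.
Proof.
move=> gc; have cgc i : continuous (fun t => c i * g i t).
  by move=> t; apply: cvgM; [exact: cvg_cst | exact: gc].
elim: r => [|i r IHr].
  by under eq_Rintegral do rewrite big_nil; rewrite Rintegral_cst // mul0r big_nil.
under eq_Rintegral do rewrite big_cons.
rewrite RintegralD //; last 2 first.
- exact: continuous_integrable_itv.
- apply: continuous_integrable_itv.
  by apply: (continuous_big add_continuous) => j _; exact: cgc.
by rewrite (RintegralZl _ _ (continuous_integrable_itv (gc i))) ?IHr ?big_cons.
Qed.

Lemma le_normr_RintegralB_itv {f g : R -> R} {e : R} :
  continuous f -> continuous g ->
  `[a, b] `<=` [set t | `|f t - g t| <= e] ->
  `|\int[mu]_(t in `[a, b]) f t - \int[mu]_(t in `[a, b]) g t| <= e * fine (mu `[a, b]).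
Proof.
move=> fc gc fg.
have fgc : continuous (fun t => f t - g t).
  by move=> t; apply: cvgB; [exact: fc | exact: gc].
rewrite -RintegralB // ?continuous_integrable_itv //.
apply: le_trans (le_normr_Rintegral _ _) _ => //; first exact: continuous_integrable_itv.
rewrite -Rintegral_cst //; apply: le_Rintegral => //; apply: continuous_integrable_itv.
- by move=> t; exact: (continuous_comp (fgc t) (@norm_continuous _ R^o _)).
- exact: cst_continuous.
Qed.

Lemma Rintegral_itv_continuous (Y : topologicalType) (g : Y * R -> R) :
  continuous g -> continuous (fun y => \int[mu]_(t in `[a, b]) g (y, t)).
Proof.
move=> gc y0; apply/cvgrPdist_le => e e0.
pose m := fine (mu `[a, b]); have m0 : 0 <= m by apply: fine_ge0; exact: measure_ge0.
have gyc y : continuous (fun t => g (y, t)).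
  exact: comp_continuous (pair_continuous (@cst_continuous _ _ y) (fun t : R => cvg_id)) gc.
have e'0 : 0 < e / (m + 1) by rewrite divr_gt0 // ltr_wpDl.
apply: filterS (near_uniform_compact y0 (@segment_compact R a b) gc e'0) => y close.
apply: le_trans (le_normr_RintegralB_itv (gyc y0) (gyc y) close) _.
by rewrite mulrAC ler_pdivrMr ?ltr_wpDl // ler_wpM2l ?lerDl // ltW.
Qed.

End IntervalIntegral.

Lemma Re_realM (R : realType) (r : R) (c : R[i]) :
  complex.Re (r%:C * c) = r * complex.Re c.
Proof. by case: c => a b /=; rewrite mul0r subr0. Qed.

Lemma Im_realM (R : realType) (r : R) (c : R[i]) :
  complex.Im (r%:C * c) = r * complex.Im c.
Proof. by case: c => a b /=; rewrite mul0r addr0. Qed.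

Lemma normr_real_complex (R : realType) (r : R) : `|r%:C| = (`|r|)%:C.
Proof. by rewrite normc_def /= expr0n addr0 sqrtr_sqr. Qed.

Section TorusIntegral.
Context {R : realType}.

(* The outer integral of [torus_int] is linear only on integrable integrands,
   which is why continuity of the inner integrals in the outer variable is
   needed. *)
Lemma torus_int_param_continuous d (Y : topologicalType) (F : Y * 'rV[R]_d -> R) :
  continuous F -> continuous (fun y => torus_int d (fun x => F (y, x))).
Proof.
elim: d Y F => [|d IHd] Y F Fc /=.
  apply: comp_continuous _ Fc.
  exact: pair_continuous (fun y : Y => cvg_id) (@cst_continuous Y _ (0 : 'rV[R]_0)).
apply: (@Rintegral_itv_continuous _ _ _ _
  (fun p : Y * R => torus_int d (fun x => F (p.1, row_cons p.2 x)))).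
apply: (IHd _ (fun q : (Y * R) * 'rV[R]_d => F (q.1.1, row_cons q.1.2 q.2))).
apply: comp_continuous _ Fc; apply: pair_continuous.
  exact: comp_continuous (fun q => cvg_fst) (fun p => cvg_fst).
apply: row_cons_continuous; last exact: (fun q => cvg_snd).
exact: comp_continuous (fun q => cvg_fst) (fun p => cvg_snd).
Qed.

Lemma torus_int_row_cons_continuous d (h : 'rV[R]_(1 + d) -> R) :
  continuous h -> continuous (fun t => torus_int d (fun x => h (row_cons t x))).
Proof.
move=> hc.
apply: (torus_int_param_continuous _ _ (fun p : R * 'rV[R]_d => h (row_cons p.1 p.2))).
apply: comp_continuous _ hc.
by apply: row_cons_continuous => p; [exact: cvg_fst | exact: cvg_snd].
Qed.

Lemma torus_int_sum d (I : Type) (r : seq I) (c : I -> R) (f : I -> 'rV[R]_d -> R) :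
  (forall i, continuous (f i)) ->
  torus_int d (fun x => \sum_(i <- r) c i * f i x) = \sum_(i <- r) c i * torus_int d (f i).
Proof.
elim: d f => [|d IHd] f fc //=.
rewrite -Rintegral_itv_sum; last by move=> i; exact: torus_int_row_cons_continuous.
apply: eq_Rintegral => t _; apply: IHd => i.
apply: comp_continuous _ (fc i).
exact: row_cons_continuous (@cst_continuous _ _ t) (fun x => cvg_id).
Qed.

Lemma torus_cint_sum d (I : Type) (r : seq I) (w : I -> R[i]) (f : I -> 'rV[R]_d -> R) :
  (forall i, continuous (f i)) ->
  torus_cint d (fun x => \sum_(i <- r) (f i x)%:C * w i) =
  \sum_(i <- r) (torus_int d (f i))%:C * w i.
Proof.
move=> fc.
have Re_sum (g : I -> R) :
    complex.Re (\sum_(i <- r) (g i)%:C * w i) = \sum_(i <- r) complex.Re (w i) * g i.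
  by rewrite raddf_sum; apply: eq_bigr => i _ /=; rewrite Re_realM mulrC.
have Im_sum (g : I -> R) :
    complex.Im (\sum_(i <- r) (g i)%:C * w i) = \sum_(i <- r) complex.Im (w i) * g i.
  by rewrite raddf_sum; apply: eq_bigr => i _ /=; rewrite Im_realM mulrC.
rewrite /torus_cint (funext (fun x => Re_sum (f^~ x))) (funext (fun x => Im_sum (f^~ x))).
by apply/eqP; rewrite eq_complex /= !torus_int_sum // Re_sum Im_sum !eqxx.
Qed.

End TorusIntegral.

Lemma continuous_det_pencil (T : topologicalType) (R : realType) n
    (Z : T -> 'M[R[i]]_n) (l : R) :
  (forall i j, continuous (fun x => complex.Re (Z x i j)) /\
               continuous (fun x => complex.Im (Z x i j))) ->
  continuous (fun x => \det (mxRe (Z x) + l *: mxIm (Z x))).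
Proof.
move=> Zc; apply: comp_continuous _ (@det_continuous R n); apply: continuous_mx => i j.
suff -> : (fun x => (mxRe (Z x) + l *: mxIm (Z x)) i j) =
          (fun x => complex.Re (Z x i j) + l * complex.Im (Z x i j)).
  move=> x; apply: cvgD; first exact: (Zc i j).1.
  by apply: cvgM; [exact: cvg_cst | exact: (Zc i j).2].
by apply/funext => x; rewrite !mxE.
Qed.

Lemma norm_torus_cint_det_le {R : realType} {n d : nat} {t : nat -> R}
    {Z : 'rV[R]_d -> 'M[R[i]]_n} :
  injective t ->
  (forall i j, continuous (fun x => complex.Re (Z x i j)) /\
               continuous (fun x => complex.Im (Z x i j))) ->
  `|torus_cint d (fun x => \det (Z x))| <=
  \sum_(k < n.+1)
    (`|torus_int d (fun x => \det (mxRe (Z x) + t k *: mxIm (Z x)))|)%:C *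
    `|lagrange_weight t k|.
Proof.
move=> t_inj Zc.
rewrite (funext (fun x => det_complex_interp t (Z x) t_inj)).
rewrite torus_cint_sum; last by move=> k; exact: continuous_det_pencil.
apply: le_trans (ler_norm_sum _ _ _) _; apply: ler_sum => k _.
by rewrite normrM normr_real_complex.
Qed.

Theorem lemma6 (R : realType) (n : nat) :
  exists C : R, 0 < C /\
  forall (d : nat) (Z : 'rV[R]_d -> 'M[R[i]]_n),
    (forall i j : 'I_n, continuous (fun x : 'rV[R]_d => complex.Re (Z x i j)) /\
                        continuous (fun x : 'rV[R]_d => complex.Im (Z x i j))) ->
    torus_periodic Z ->
    (forall x, Z x \in unitmx) ->
    `|torus_cint d (fun x => \det (Z x))| = 1 ->
    exists2 lambda : R, -1 <= lambda <= 1 &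
      C <= `|torus_int d (fun x => \det (mxRe (Z x) + lambda *: mxIm (Z x)))|.
Proof.
pose t k : R := k%:R / n.+1%:R.
have t_inj : injective t.
  by move=> k l /(mulIf (invr_neq0 (lt0r_neq0 (ltr0Sn _ _)))) /eqP; rewrite eqr_nat => /eqP.
(* In [R[i]], [`|w|] is [(Normc.normc w)%:C] by definition. *)
pose S := \sum_(k < n.+1) Normc.normc (lagrange_weight t k).
have S_ge0 : 0 <= S.
  by apply: sumr_ge0 => k _; case: (lagrange_weight t k) => ? ?; exact: sqrtr_ge0.
exists (1 + S)^-1; split; first by rewrite invr_gt0; lra.
move=> d Z Zc _ _ detZ1.
pose I k := torus_int d (fun x => \det (mxRe (Z x) + t k *: mxIm (Z x))).
have [[k Ik] | small] := pselect (exists k : 'I_n.+1, (1 + S)^-1 <= `|I k|).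
  exists (t k) => //; have t_ge0 : 0 <= t k by rewrite divr_ge0.
  by apply/andP; split; [lra | rewrite ler_pdivrMr ?ltr0Sn // mul1r ler_nat ltnW].
have {}small (k : 'I_n.+1) : `|I k| <= (1 + S)^-1.
  by move: small => /forallNP /(_ k) /negP; rewrite -ltNge => /ltW.
have contra : 1 <= (1 + S)^-1 * S.
  rewrite -lecR rmorph1 -detZ1.
  apply: le_trans (norm_torus_cint_det_le t_inj Zc) _.
  rewrite rmorphM rmorph_sum mulr_sumr /=; apply: ler_sum => k _.
  by apply: ler_wpM2r => //; rewrite lecR small.
exfalso; move: contra; rewrite mulrC ler_pdivlMr; lra.
Qed.
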